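(* Let $G$ be a finite connected weighted graph with $N$ vertices, let $0=\lambda_0<\lambda_1\le\cdots\le\lambda_{N-1}$ be the eigenvalues (with multiplicity) of its weighted Laplacian $L_w$ on $\ell^2(G)$, and let $\mathcal{S}=(S_m)_{m=0,\ldots,n}$ be a partition of $V(G)$ with $K_m(\mathcal{S})>0$ for all $m=0,\ldots,n-1$. Then \[ \mathcal{N}\left[0,\ (2\delta_{\mathcal{S},2}^2)^{-1}\right)\le|S_0| \quad\text{and}\quad \mathcal{N}\left[(2\delta_{\mathcal{S},2}^2)^{-1},\ \lambda_{N-1}\right]\ge N-|S_0|. \]
   Context: $G$ has vertex set $V(G)$ and symmetric weights $w:V(G)\times V(G)\to[0,\infty)$ with $w(u,u)=0$; connected means the graph with edges $\{(u,v):w(u,v)>0\}$ is connected. Vertex weight $\nu\equiv1$. $(L_wf)(v)=\sum_{u}(f(v)-f(u))w(v,u)$. For an interval $I$, $\mathcal{N}I$ is the number of eigenvalues of $L_w$ in $I$ counted with multiplicity. $w_A(v)=\sum_{u\in A}w(u,v)$; $D_m=\sup_{v\in S_m}w_{S_{m+1}}(v)$, $K_m=\inf_{v\in S_{m+1}}w_{S_m}(v)$, and $\delta_{\mathcal{S},2}=\left(\sum_{m=1}^n\sum_{k=1}^m\frac{1}{K_{k-1}}\prod_{i=k}^{m-1}\frac{D_i}{K_i}\right)^{1/2}$ (empty products $=1$, empty sums $=0$, and $(2\delta_{\mathcal{S},2}^2)^{-1}=+\infty$ if $\delta_{\mathcal{S},2}=0$). *)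

From HB Require Import structures.
From mathcomp Require Import all_boot all_order all_algebra.
From mathcomp Require Import polyrcf.
From mathcomp Require Import reals.
Set Implicit Arguments. Unset Strict Implicit. Unset Printing Implicit Defensive.
Import Order.TTheory GRing.Theory Num.Theory.
Local Open Scope ring_scope.

Section GraphDefs.
Variables (R : realType) (V : finType).

(* minimum / maximum of f over a finite set A (meaningful for A nonempty; 0 on the empty set) *)
Definition finmin (A : {set V}) (f : V -> R) : R :=
  if [pick v in A] is Some v0 then \big[Num.min/f v0]_(v in A) f v else 0.
Definition finmax (A : {set V}) (f : V -> R) : R :=
  if [pick v in A] is Some v0 then \big[Num.max/f v0]_(v in A) f v else 0.

Definition weight_ok (w : V -> V -> R) : Prop :=
  [/\ forall u v, w u v = w v u, forall u v, 0 <= w u v & forall u, w u u = 0].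

Definition connected_w (w : V -> V -> R) : Prop :=
  forall u v, connect (fun x y => 0 < w x y) u v.

Definition wset (w : V -> V -> R) (A : {set V}) (v : V) : R := \sum_(u in A) w u v.

(* matrix of L_w (vertex weight 1) in the basis of indicator functions, indexed via enum_val *)
Definition laplacian (w : V -> V -> R) : 'M[R]_#|V| :=
  \matrix_(i, j) ((i == j)%:R * (\sum_u w (enum_val i) u) - w (enum_val i) (enum_val j)).

Definition eig_count (w : V -> V -> R) (I : R -> bool) : nat :=
  \sum_(x <- rootsR (char_poly (laplacian w)) | I x) mup x (char_poly (laplacian w)).

(* largest eigenvalue lambda_{N-1} (rootsR is sorted increasingly) *)
Definition lambda_max (w : V -> V -> R) : R := last 0 (rootsR (char_poly (laplacian w))).

(* partition S_0,...,S_n given by a surjective map part : V -> 'I_(n+1) ; S_m = part^-1(m) *)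
Definition Spart (n : nat) (part : V -> 'I_n.+1) (m : nat) : {set V} :=
  [set v | val (part v) == m].

Definition Dm (w : V -> V -> R) n (part : V -> 'I_n.+1) (m : nat) : R :=
  finmax (Spart part m) (wset w (Spart part m.+1)).
Definition Km (w : V -> V -> R) n (part : V -> 'I_n.+1) (m : nat) : R :=
  finmin (Spart part m.+1) (wset w (Spart part m)).

Definition delta2sq (w : V -> V -> R) n (part : V -> 'I_n.+1) : R :=
  \sum_(1 <= m < n.+1) \sum_(1 <= k < m.+1)
     (Km w part k.-1)^-1 * \prod_(k <= i < m) (Dm w part i / Km w part i).

End GraphDefs.

(* Hardy inequality plus a dimension count.  For f vanishing on S_0, write F_m for
   the mass of f^2 on S_m and E_{<m} for the Dirichlet energy across the first m
   layers.  Since every vertex of S_{m+1} receives weight at least K_m from S_m and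
   every vertex of S_m sends weight at most D_m to S_{m+1}, a Peter-Paul inequality
   on each edge gives F_{m+1} <= Y_{m+1} E_{<m+1} from F_m <= Y_m E_{<m}, with
   Y_{m+1} = (1 + D_m Y_m) / K_m.  Summing over m yields
   sum_v f(v)^2 <= delta^2 <L_w f, f>.  If more than |S_0| eigenvalues lay below
   1/(2 delta^2), the span of their eigenvectors would contain a nonzero vector
   vanishing on S_0, whose Rayleigh quotient would be below 1/(2 delta^2): this
   contradicts the Hardy inequality.  The complementary count follows since every
   eigenvalue is at most lambda_{N-1}. *)

From HB Require Import structures.
From mathcomp Require Import all_boot all_order all_algebra.
From mathcomp Require Import polyrcf complex spectral sesquilinear.
From mathcomp Require Import reals.
From mathcomp Require Import ring lra zify.
Import Order.TTheory GRing.Theory Num.Theory.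
Set Implicit Arguments. Unset Strict Implicit. Unset Printing Implicit Defensive.
Local Open Scope ring_scope.
Local Open Scope sesquilinear_scope.
Local Open Scope complex_scope.

Lemma finmax_ge (R : realType) (V : finType) (A : {set V}) (f : V -> R) v :
  v \in A -> f v <= finmax A f.
Proof.
rewrite /finmax => vA; case: pickP => [v0 _|/(_ v)]; last by rewrite vA.
by rewrite (bigD1 v) //= le_max lexx.
Qed.

Lemma finmin_le (R : realType) (V : finType) (A : {set V}) (f : V -> R) v :
  v \in A -> finmin A f <= f v.
Proof.
rewrite /finmin => vA; case: pickP => [v0 _|/(_ v)]; last by rewrite vA.
by rewrite (bigD1 v) //= ge_min lexx.
Qed.

Lemma peter_paul_sqr (R : realDomainType) (r x y : R) :
  r * x ^+ 2 <= r * (1 + r) * (x - y) ^+ 2 + (1 + r) * y ^+ 2.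
Proof.
rewrite -subr_ge0.
have -> : r * (1 + r) * (x - y) ^+ 2 + (1 + r) * y ^+ 2 - r * x ^+ 2
    = (r * (x - y) - y) ^+ 2 by ring.
exact: sqr_ge0.
Qed.

(* Use the hypothesis at [r = rho + t] for small [t > 0]; [r = rho] alone fails
   when [rho = 0]. *)
Lemma le_of_peter_paul (R : realFieldType) (A B X C rho : R) :
  0 <= rho -> 0 <= B -> 0 <= C -> X <= rho * C ->
  (forall r, 0 < r -> r * A <= r * (1 + r) * B + (1 + r) * X) ->
  A <= (1 + rho) * (B + C).
Proof.
move=> rho0 B0 C0 XC scaled; apply/ler_addgt0Pr => e e0.
have BC1 : 0 < B + C + 1 by rewrite ltr_wpDl ?addr_ge0.
set t := e / (B + C + 1).
have t0 : 0 < t by rewrite divr_gt0.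
have tBC : t * (B + C) <= e.
  by rewrite mulrAC ler_pdivrMr // ler_pM2l // lerDl.
have r0 : 0 < rho + t by rewrite ltr_wpDl.
have r1 : 0 <= 1 + (rho + t) := addr_ge0 ler01 (ltW r0).
have hA := scaled _ r0.
have hX : (1 + (rho + t)) * X <= (1 + (rho + t)) * (rho * C) by rewrite ler_wpM2l.
have htC : 0 <= (1 + (rho + t)) * (t * C) by rewrite mulr_ge0 // mulr_ge0 // ltW.
have he : (rho + t) * (t * (B + C)) <= (rho + t) * e by rewrite ler_wpM2l // ltW.
rewrite -(ler_pM2l r0); nra.
Qed.

Lemma sorted_le_last d (T : porderType d) (x0 : T) (s : seq T) x :
  sorted <%O s -> x \in s -> (x <= last x0 s)%O.
Proof.
case: s => [//|y s] /=; elim: s y x => [|z s IH] y x /=.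
  by rewrite inE => _ /eqP ->.
move=> /andP[yz zs]; rewrite inE => /orP[/eqP ->|xs]; last exact: IH.
exact: le_trans (ltW yz) (IH _ _ zs (mem_head _ _)).
Qed.

Lemma sum_eq_uniq (T : eqType) (t : seq T) y : uniq t ->
  (\sum_(x <- t) (y == x) = (y \in t))%N.
Proof.
elim: t => [|z t IH]; first by rewrite big_nil.
rewrite /= big_cons in_cons => /andP[zt ut]; rewrite IH //.
by case: eqP => // ->; rewrite (negbTE zt).
Qed.

Lemma sum_count_mem_uniq (T : eqType) (t s : seq T) (I : pred T) :
  uniq t -> {subset s <= t} ->
  (\sum_(x <- t | I x) count_mem x s = count I s)%N.
Proof.
move=> ut; elim: s => [|y s IH] st; first by rewrite big1.
rewrite /= big_split /= IH => [|x xs]; last by rewrite st // inE xs orbT.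
congr (_ + _)%N; rewrite -big_filter sum_eq_uniq ?filter_uniq //.
by rewrite mem_filter st ?andbT // mem_head.
Qed.

Lemma char_poly_similar (F : fieldType) n (P A : 'M[F]_n) : P \in unitmx ->
  char_poly (invmx P *m A *m P) = char_poly A.
Proof.
move=> Pu; rewrite /char_poly.
set Q := map_mx (@polyC F) P; set Qi := map_mx (@polyC F) (invmx P).
have QiQ : Qi *m Q = 1%:M by rewrite -map_mxM mulVmx // map_mx1.
have -> : char_poly_mx (invmx P *m A *m P) = Qi *m char_poly_mx A *m Q.
  rewrite /char_poly_mx mulmxBr mulmxBl -!map_mxM; congr (_ - _).
  by rewrite scalar_mxC -mulmxA QiQ mulmx1.
by rewrite !det_mulmx mulrAC -det_mulmx QiQ det1 mul1r.
Qed.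

Lemma exists_supported_kernel (F : fieldType) m p (A : 'M[F]_(m, p))
    (J : {set 'I_m}) (S : {set 'I_p}) : (#|S| < #|J|)%N ->
  exists2 b : 'rV[F]_m, b != 0 &
    (forall i, i \notin J -> b 0 i = 0) /\ (forall k, k \in S -> (b *m A) 0 k = 0).
Proof.
move=> SJ; pose f := @enum_val _ (mem J); pose g := @enum_val _ (mem S).
pose a := nz_row (kermx (mxsub f g A)).
have a0 : a != 0.
  rewrite nz_row_eq0 -mxrank_eq0 mxrank_ker subn_eq0 -ltnNge.
  exact: leq_ltn_trans (rank_leq_col _) SJ.
have aM : a *m mxsub f g A = 0 by apply/sub_kermxP; exact: nz_row_sub.
exists (a *m rowsub f 1%:M).
  apply: contraNneq a0 => /rowP b0; apply/eqP/rowP => j.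
  have := b0 (f j); rewrite !mxE (bigD1 j) //= !mxE eqxx mulr1 big1 ?addr0 //.
  by move=> j' /negbTE jj'; rewrite !mxE (inj_eq enum_val_inj) jj' mulr0.
split=> [i iJ|k kS].
  rewrite mxE big1 // => j _; rewrite !mxE.
  by case: eqP (enum_valP j) iJ => [<- ->|_ _ _]; rewrite ?mulr0.
transitivity ((a *m mxsub f g A) 0 (enum_rank_in kS k)); last by rewrite aM mxE.
rewrite -mulmxA mul_rowsub_mx mul1mx !mxE; apply: eq_bigr => j _.
by rewrite !mxE /g enum_rankK_in.
Qed.

Section HardyInequality.
Variables (R : realType) (V : finType) (w : V -> V -> R) (n : nat).
Variable part : V -> 'I_n.+1.
Hypothesis w_ge0 : forall u v, 0 <= w u v.
Hypothesis w_sym : forall u v, w u v = w v u.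
Hypothesis K_gt0 : forall m, (m < n)%N -> 0 < Km w part m.

Local Notation S := (Spart part).
Local Notation K := (Km w part).
Local Notation D := (Dm w part).

Lemma mem_Spart v m : (v \in S m) = (val (part v) == m).
Proof. by rewrite inE. Qed.

Lemma Dm_ge0 m : 0 <= D m.
Proof.
rewrite /Dm; case: (set_0Vmem (S m)) => [->|[v vS]].
  by rewrite /finmax; case: pickP => // v; rewrite inE.
apply: le_trans (finmax_ge _ vS); exact: sumr_ge0.
Qed.

Definition hardy_const m :=
  \sum_(1 <= k < m.+1) (K k.-1)^-1 * \prod_(k <= i < m) (D i / K i).

Lemma delta2sqE : delta2sq w part = \sum_(1 <= m < n.+1) hardy_const m.
Proof. by []. Qed.

Lemma hardy_const0 : hardy_const 0 = 0.
Proof. by rewrite /hardy_const big_geq. Qed.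

Lemma hardy_constS m : hardy_const m.+1 = (1 + D m * hardy_const m) / K m.
Proof.
rewrite /hardy_const big_nat_recr //= [X in _ * X]big_geq // mulr1.
rewrite mulrDl mul1r addrC mulrAC mulr_sumr; congr (_ + _).
apply: eq_big_nat => k /andP[_ km].
by rewrite (@big_nat_recr _ _ _ m k _ km) /=; ring.
Qed.

Lemma hardy_const_ge0 m : (m <= n)%N -> 0 <= hardy_const m.
Proof.
elim: m => [|m IH] mn; first by rewrite hardy_const0.
rewrite hardy_constS; apply: divr_ge0; last exact/ltW/K_gt0.
by apply/addr_ge0/mulr_ge0; [| exact: Dm_ge0 | exact/IH/ltnW].
Qed.

Lemma delta2sq_ge0 : 0 <= delta2sq w part.
Proof.
rewrite delta2sqE big_seq_cond sumr_ge0 // => m /andP[].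
by rewrite mem_index_iota => /andP[_ mn] _; apply: hardy_const_ge0.
Qed.

Lemma delta2sq_gt0 : (0 < n)%N -> 0 < delta2sq w part.
Proof.
move=> n0; rewrite delta2sqE big_ltn // hardy_constS hardy_const0 mulr0 addr0.
apply: ltr_wpDr; last by rewrite mul1r invr_gt0 K_gt0.
rewrite big_seq_cond sumr_ge0 // => m /andP[].
by rewrite mem_index_iota => /andP[_ mn] _; apply: hardy_const_ge0.
Qed.

Lemma sum_by_layers (h : V -> R) :
  \sum_v h v = \sum_(0 <= m < n.+1) \sum_(v in S m) h v.
Proof.
rewrite (partition_big part predT) //= big_mkord.
by apply: eq_bigr => j _; apply: eq_bigl => v; rewrite mem_Spart.
Qed.

Section VanishingOnS0.
Variable f : V -> R.
Hypothesis f_S0 : forall v, v \in S 0 -> f v = 0.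

Definition layer_mass m := \sum_(v in S m) f v ^+ 2.
Definition layer_energy m :=
  \sum_(u in S m) \sum_(v in S m.+1) w u v * (f v - f u) ^+ 2.
Definition energy_upto m := \sum_(0 <= k < m) layer_energy k.

Lemma layer_energy_ge0 m : 0 <= layer_energy m.
Proof. by do 2!apply: sumr_ge0 => ? _; rewrite mulr_ge0 ?sqr_ge0. Qed.

Lemma energy_upto_ge0 m : 0 <= energy_upto m.
Proof. by apply: sumr_ge0 => k _; apply: layer_energy_ge0. Qed.

Lemma energy_upto_le m p : (m <= p)%N -> energy_upto m <= energy_upto p.
Proof.
move=> mp; rewrite /energy_upto (big_cat_nat (leq0n m) mp) /= lerDl.
by apply: sumr_ge0 => k _; apply: layer_energy_ge0.
Qed.

Lemma layer_mass0 : layer_mass 0 = 0.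
Proof. by rewrite /layer_mass big1 // => v /f_S0 ->; rewrite expr0n. Qed.

Lemma layer_mass_step m : (m < n)%N ->
  layer_mass m <= hardy_const m * energy_upto m ->
  layer_mass m.+1 <= hardy_const m.+1 * energy_upto m.+1.
Proof.
move=> mn IH; set rho := D m * hardy_const m.
have Km0 := K_gt0 mn.
have inflow : K m * layer_mass m.+1 <=
    \sum_(u in S m) \sum_(v in S m.+1) w u v * f v ^+ 2.
  rewrite /layer_mass mulr_sumr exchange_big /=; apply: ler_sum => v vS.
  by rewrite -mulr_suml ler_wpM2r ?sqr_ge0 //; apply: finmin_le.
have outflow : \sum_(u in S m) \sum_(v in S m.+1) w u v * f u ^+ 2 <=
    rho * energy_upto m.
  apply: (@le_trans _ _ (D m * layer_mass m)); last first.
    by rewrite /rho -mulrA ler_wpM2l ?Dm_ge0.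
  rewrite /layer_mass mulr_sumr; apply: ler_sum => u uS.
  rewrite -mulr_suml ler_wpM2r ?sqr_ge0 //.
  under eq_bigr do rewrite w_sym.
  exact: finmax_ge.
have young r : 0 < r -> r * (K m * layer_mass m.+1) <=
    r * (1 + r) * layer_energy m +
    (1 + r) * \sum_(u in S m) \sum_(v in S m.+1) w u v * f u ^+ 2.
  move=> r0; apply: le_trans (ler_wpM2l (ltW r0) inflow) _.
  rewrite !mulr_sumr -big_split /=; apply: ler_sum => u _.
  rewrite !mulr_sumr -big_split /=; apply: ler_sum => v _.
  rewrite mulrCA [_ * (1 + r) * _]mulrCA [(1 + r) * _]mulrCA -mulrDr.
  by rewrite ler_wpM2l // peter_paul_sqr.
have rho0 : 0 <= rho := mulr_ge0 (Dm_ge0 m) (hardy_const_ge0 (ltnW mn)).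
have := le_of_peter_paul rho0 (layer_energy_ge0 m) (energy_upto_ge0 m) outflow young.
rewrite hardy_constS -/rho /energy_upto big_nat_recr //= -/(energy_upto m).
by rewrite mulrAC ler_pdivlMr // mulrC addrC.
Qed.

Lemma layer_mass_le m : (m <= n)%N ->
  layer_mass m <= hardy_const m * energy_upto m.
Proof.
elim: m => [|m IH] mn; first by rewrite layer_mass0 hardy_const0 mul0r.
exact/layer_mass_step/IH/ltnW.
Qed.

Lemma energy_upto_total : energy_upto n =
  \sum_u \sum_v ((val (part u)).+1 == val (part v))%:R * (w u v * (f u - f v) ^+ 2).
Proof.
rewrite sum_by_layers big_nat_recr //= [X in _ + X]big1 ?addr0; last first.
  move=> u; rewrite mem_Spart => /eqP ->; rewrite big1 // => v _.
  by rewrite (gtn_eqF (ltn_ord (part v))) mul0r.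
apply: eq_bigr => k _; apply: eq_bigr => u; rewrite mem_Spart => /eqP ->.
rewrite (big_mkcond (fun v => v \in S k.+1)); apply: eq_bigr => v _.
by rewrite mem_Spart eq_sym; case: eqP; rewrite ?mul1r ?mul0r // -sqrrN opprB.
Qed.

Lemma energy_upto_total_le :
  2 * energy_upto n <= \sum_u \sum_v w u v * (f u - f v) ^+ 2.
Proof.
pose G u v := w u v * (f u - f v) ^+ 2.
pose adj u v := ((val (part u)).+1 == val (part v))%:R : R.
have adj_le1 (a b : nat) : ((a.+1 == b) + (b.+1 == a) <= 1)%N by lia.
have adj_sym : \sum_u \sum_v adj u v * G u v = \sum_u \sum_v adj v u * G u v.
  rewrite exchange_big /=; apply: eq_bigr => u _; apply: eq_bigr => v _.
  by rewrite /G w_sym -sqrrN opprB.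
rewrite energy_upto_total -/adj -/G mulr2n mulrDl mul1r {2}adj_sym -big_split.
apply: ler_sum => u _; rewrite -big_split; apply: ler_sum => v _ /=.
rewrite -mulrDl; apply: ler_piMl; first exact: mulr_ge0 (w_ge0 u v) (sqr_ge0 _).
by rewrite /adj -[_ + _]natrD lern1 adj_le1.
Qed.

Theorem hardy_inequality : 2 * \sum_v f v ^+ 2 <=
  delta2sq w part * \sum_u \sum_v w u v * (f u - f v) ^+ 2.
Proof.
have mass_le : \sum_v f v ^+ 2 <= delta2sq w part * energy_upto n.
  rewrite sum_by_layers big_ltn // -/(layer_mass 0) layer_mass0 add0r.
  rewrite delta2sqE mulr_suml; apply: ler_sum_nat => m /andP[_ mn].
  apply: le_trans (layer_mass_le mn) _.
  by rewrite ler_wpM2l ?hardy_const_ge0 ?energy_upto_le.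
apply: le_trans (ler_wpM2l delta2sq_ge0 energy_upto_total_le).
by rewrite mulrCA ler_wpM2l.
Qed.

End VanishingOnS0.
End HardyInequality.

Section LaplacianSpectrum.
Variables (R : realType) (V : finType) (w : V -> V -> R).
Hypothesis w_sym : forall u v, w u v = w v u.

Local Notation N := #|V|.

Definition laplacianC : 'M[R[i]]_N := map_mx (real_complex R) (laplacian w).
Definition eigbasis := spectralmx laplacianC.
Definition eigval (i : 'I_N) : R := complex.Re (spectral_diag laplacianC 0 i).

Lemma laplacianC_herm : laplacianC \is hermsymmx.
Proof.
apply/is_hermitianmxP; rewrite expr0 scale1r; apply/matrixP => i j.
rewrite !mxE conj_Creal; last by apply/complex_realP; eexists.
by rewrite w_sym eq_sym; case: eqP => [->|]; rewrite ?mul0r.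
Qed.

Lemma eigbasis_unitary : eigbasis \is unitarymx.
Proof. exact: spectral_unitarymx. Qed.

Lemma laplacianC_diag :
  laplacianC = eigbasis^t* *m diag_mx (spectral_diag laplacianC) *m eigbasis.
Proof.
rewrite -invmx_unitary ?eigbasis_unitary //.
exact/orthomx_spectralP/hermitian_normalmx/laplacianC_herm.
Qed.

Lemma eigvalE i : (eigval i)%:C = spectral_diag laplacianC 0 i.
Proof.
rewrite /eigval RRe_real //.
by have /mxOverP := hermitian_spectral_diag_real laplacianC_herm; apply.
Qed.

Definition spectrum := [seq eigval i | i <- enum 'I_N].

Lemma char_poly_laplacian :
  char_poly (laplacian w) = \prod_(x <- spectrum) ('X - x%:P).
Proof.
rewrite big_map big_enum /=; apply: (map_poly_inj (real_complex R)).
rewrite map_char_poly map_prod_XsubC -/laplacianC laplacianC_diag.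
rewrite -invmx_unitary ?eigbasis_unitary // char_poly_similar; last first.
  exact/unitarymx_unit/eigbasis_unitary.
rewrite char_poly_trig ?diag_mx_is_trig //; apply: eq_bigr => i _.
by rewrite mxE eqxx mulr1n; congr (_ - _%:P); exact/esym/eigvalE.
Qed.

Lemma eig_countE (I : pred R) : eig_count w I = #|[set i | I (eigval i)]|.
Proof.
rewrite /eig_count char_poly_laplacian.
have p0 : \prod_(x <- spectrum) ('X - x%:P) != 0.
  by rewrite monic_neq0 // monic_prod_XsubC.
under eq_bigr do rewrite mu_prod_XsubC.
rewrite sum_count_mem_uniq ?uniq_roots //; last first.
  by move=> x xs; rewrite -roots_on_rootsR // root_prod_XsubC xs in_itv.
by rewrite count_map -sum1_count -sum1dep_card big_enum_cond.
Qed.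

Lemma eigval_le_max i : eigval i <= lambda_max w.
Proof.
rewrite /lambda_max char_poly_laplacian.
have p0 : \prod_(x <- spectrum) ('X - x%:P) != 0.
  by rewrite monic_neq0 // monic_prod_XsubC.
apply: sorted_le_last (sorted_roots _ _ _) _.
by rewrite -roots_on_rootsR // root_prod_XsubC in_itv /= map_f // mem_enum.
Qed.

Lemma eigbasis_normE (b : 'rV[R[i]]_N) :
  ((b *m eigbasis) *m (b *m eigbasis)^t*) 0 0 = \sum_i `|b 0 i| ^+ 2.
Proof.
rewrite trmx_mul map_mxM mulmxA mulmxtVK ?eigbasis_unitary // mxE.
by apply: eq_bigr => i _; rewrite !mxE normCK.
Qed.

Lemma eigbasis_formE (b : 'rV[R[i]]_N) :
  ((b *m eigbasis) *m laplacianC *m (b *m eigbasis)^t*) 0 0 =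
  \sum_i (eigval i)%:C * `|b 0 i| ^+ 2.
Proof.
have U := eigbasis_unitary.
rewrite laplacianC_diag trmx_mul map_mxM !mulmxA !mulmxtVK // mxE.
apply: eq_bigr => i _; rewrite mul_mx_diag !mxE normCK -eigvalE.
by rewrite mulrAC [LHS]mulrC.
Qed.

Lemma laplacianC_form (u : 'rV[R[i]]_N) :
  \sum_i \sum_j (w (enum_val i) (enum_val j))%:C * `|u 0 i - u 0 j| ^+ 2 =
  2 * (u *m laplacianC *m u^t*) 0 0.
Proof.
pose W (i j : 'I_N) := (w (enum_val i) (enum_val j))%:C.
have W_sym i j : W i j = W j i by rewrite /W w_sym.
have act j : (u *m laplacianC) 0 j = \sum_i W i j * (u 0 j - u 0 i).
  rewrite mxE; under eq_bigr do rewrite !mxE rmorphB rmorphM /= rmorph_nat mulrBr.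
  rewrite sumrB (bigD1 j) //= eqxx mul1r [X in _ + X - _]big1 ?addr0; last first.
    by move=> i /negbTE ->; rewrite mul0r mulr0.
  rewrite rmorph_sum (reindex (@enum_val V predT)) /=; last first.
    by apply: onW_bij; exact: enum_val_bij.
  rewrite mulr_sumr -sumrB; apply: eq_bigr => i _; rewrite /W w_sym; ring.
have form : (u *m laplacianC *m u^t*) 0 0 =
    \sum_j \sum_i W i j * (u 0 j - u 0 i) * (u 0 j)^*.
  by rewrite mxE; apply: eq_bigr => j _; rewrite act !mxE mulr_suml.
have expand : \sum_i \sum_j W i j * `|u 0 i - u 0 j| ^+ 2 =
    \sum_i \sum_j W i j * (u 0 i - u 0 j) * (u 0 i)^* +
    \sum_i \sum_j W i j * (u 0 j - u 0 i) * (u 0 j)^*.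
  rewrite -big_split; apply: eq_bigr => i _; rewrite -big_split; apply: eq_bigr => j _.
  by rewrite /= normCK rmorphB; ring.
rewrite expand [X in _ + X]exchange_big -form.
have -> : \sum_i \sum_j W i j * (u 0 i - u 0 j) * (u 0 i)^* =
    (u *m laplacianC *m u^t*) 0 0.
  by rewrite form; apply: eq_bigr => i _; apply: eq_bigr => j _; rewrite W_sym.
by rewrite mulr2n mulrDl mul1r.
Qed.
Lemma eigbasis_form_lt (b : 'rV[R[i]]_N) (c : R) : b != 0 ->
    (forall i, ~~ (eigval i < c) -> b 0 i = 0) ->
  \sum_i (eigval i)%:C * `|b 0 i| ^+ 2 < c%:C * \sum_i `|b 0 i| ^+ 2.
Proof.
move=> b0 b_supp; have [j bj] : exists j, b 0 j != 0.
  apply/existsP; apply: contraNT b0 => /existsPn b_eq0.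
  by apply/eqP/rowP => j; rewrite mxE; apply/eqP/negbNE/b_eq0.
have lam_lt_c : eigval j < c by apply: contraNT bj => /b_supp ->.
rewrite -subr_gt0 mulr_sumr -sumrB (bigD1 j) //= -mulrBl.
apply: ltr_wpDr.
  apply: sumr_ge0 => i _; rewrite -mulrBl.
  have [/ltW lam_le_c|/b_supp ->] := boolP (eigval i < c).
    by rewrite mulr_ge0 ?exprn_ge0 // subr_ge0 lecR.
  by rewrite normr0 expr0n /= mulr0.
by rewrite mulr_gt0 ?exprn_gt0 ?normr_gt0 // subr_gt0 ltcR.
Qed.

End LaplacianSpectrum.

Section SmallEigenvalues.
Variables (R : realType) (V : finType) (w : V -> V -> R) (n : nat).
Variable part : V -> 'I_n.+1.
Hypothesis w_ge0 : forall u v, 0 <= w u v.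
Hypothesis w_sym : forall u v, w u v = w v u.
Hypothesis K_gt0 : forall m, (m < n)%N -> 0 < Km w part m.

Local Notation N := #|V|.

Lemma hardy_inequalityC (u : 'rV[R[i]]_N) :
  (forall v, v \in Spart part 0 -> u 0 (enum_rank v) = 0) ->
  (u *m u^t*) 0 0 <= (delta2sq w part)%:C * (u *m laplacianC w *m u^t*) 0 0.
Proof.
move=> u_S0; pose g v := complex.Re `|u 0 (enum_rank v)|.
have gE v : (g v)%:C = `|u 0 (enum_rank v)| by rewrite /g RRe_real // normr_real.
have g_S0 v : v \in Spart part 0 -> g v = 0 by move=> /u_S0 u0; rewrite /g u0 normr0.
have sum_enum_val (F : V -> R[i]) : \sum_v F v = \sum_(i < N) F (enum_val i).
  by rewrite (reindex (@enum_val V predT)) //; apply: onW_bij; exact: enum_val_bij.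
have norm : (\sum_v g v ^+ 2)%:C = (u *m u^t*) 0 0.
  rewrite rmorph_sum sum_enum_val mxE; apply: eq_bigr => i _.
  by rewrite rmorphXn /= gE enum_valK !mxE normCK.
have energy : (\sum_a \sum_b w a b * (g a - g b) ^+ 2)%:C <=
    2 * (u *m laplacianC w *m u^t*) 0 0.
  rewrite -laplacianC_form // rmorph_sum sum_enum_val; apply: ler_sum => i _.
  rewrite rmorph_sum sum_enum_val; apply: ler_sum => j _.
  rewrite rmorphM /= ler_wpM2l ?ler0c // rmorphXn rmorphB /= !gE !enum_valK.
  have real_diff : `|u 0 i| - `|u 0 j| \is Num.real by rewrite rpredB // normr_real.
  rewrite -(real_normK real_diff) !expr2.
  by apply: ler_pM => //; apply: ler_dist_dist.
have hardyC := hardy_inequality w_ge0 w_sym K_gt0 g_S0.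
rewrite -lecR !rmorphM /= rmorph_nat norm in hardyC.
have d2C_ge0 : 0 <= (delta2sq w part)%:C by rewrite ler0c delta2sq_ge0.
have := le_trans hardyC (ler_wpM2l d2C_ge0 energy).
by rewrite mulrCA ler_pM2l.
Qed.

Lemma card_small_eigval : (0 < n)%N ->
  (#|[set i | (eigval w i < (2 * delta2sq w part)^-1)%R]| <= #|Spart part 0|)%N.
Proof.
move=> n_gt0; set c := (2 * delta2sq w part)^-1; set J := [set i | _ < c].
have d2_gt0 := delta2sq_gt0 w_ge0 K_gt0 n_gt0.
rewrite leqNgt; apply/negP => S0_lt_J.
have [b b0 [bJ bS0]] : exists2 b : 'rV[R[i]]_N, b != 0 &
    (forall i, i \notin J -> b 0 i = 0) /\
    (forall k, k \in enum_rank @: Spart part 0 -> (b *m eigbasis w) 0 k = 0).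
  by apply: exists_supported_kernel; rewrite card_imset //; exact: enum_rank_inj.
have := hardy_inequalityC (fun v vS => bS0 _ (imset_f _ vS)).
rewrite eigbasis_normE eigbasis_formE //.
set s := \sum_i `|b 0 i| ^+ 2 => hardyb.
have s_ge0 : 0 <= s by apply: sumr_ge0 => i _; apply: exprn_ge0.
have below_c : \sum_i (eigval w i)%:C * `|b 0 i| ^+ 2 < c%:C * s.
  by apply: eigbasis_form_lt => // i ci; apply: bJ; rewrite inE.
have d2c_le1 : delta2sq w part * c <= 1.
  by rewrite /c invfM mulrCA divff ?gt_eqF // mulr1 invf_le1 ?ler1n.
have d2C_gt0 : 0 < (delta2sq w part)%:C by rewrite -[0]/((0 : R)%:C) ltcR.
rewrite -(ltr_pM2l d2C_gt0) mulrA -rmorphM in below_c.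
have : s < s.
  apply: le_lt_trans hardyb (lt_le_trans below_c _).
  by rewrite ler_piMl // -(rmorph1 (real_complex R)) lecR.
by rewrite ltxx.
Qed.

End SmallEigenvalues.

Theorem theorem3p3 (R : realType) (V : finType) (w : V -> V -> R)
    (n : nat) (part : V -> 'I_n.+1) :
  weight_ok w -> connected_w w ->
  (forall m : 'I_n.+1, exists v, part v = m) ->
  (forall m, leq m.+1 n -> 0 < Km w part m) ->
  let d2 := delta2sq w part in
  leq (eig_count w (fun x => (0 <= x) && ((d2 == 0) || (x < (2 * d2)^-1))))
      #|Spart part 0| /\
  leq (#|V| - #|Spart part 0|)
      (eig_count w (fun x => [&& d2 != 0, (2 * d2)^-1 <= x & x <= lambda_max w])).
Proof.
move=> [w_sym w_ge0 _] _ _ K_gt0 d2; rewrite !eig_countE //.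
have [n0|n_gt0] := posnP n.
  subst n; have -> : Spart part 0 = [set: V].
    by apply/setP => v; rewrite !inE; case: (part v) => [[]].
  by rewrite cardsT subnn; split=> //; rewrite -[X in (_ <= X)%N]card_ord max_card.
have small := card_small_eigval w_ge0 w_sym K_gt0 n_gt0.
rewrite (gt_eqF (delta2sq_gt0 w_ge0 K_gt0 n_gt0)) /=; split.
  apply: leq_trans small; apply/subset_leq_card/subsetP => i.
  by rewrite !inE => /andP[].
have -> : [set i | (2 * d2)^-1 <= eigval w i <= lambda_max w] =
    ~: [set i | eigval w i < (2 * d2)^-1].
  by apply/setP => i; rewrite !inE eigval_le_max // andbT leNgt.
by rewrite [#|~: _|]cardsCs setCK card_ord leq_sub2l.
Qed.
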